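(* For every set of formulas $\Gamma$ and formula $\varphi$: $\Gamma\vdash_{\mathsf{NeL}+\{\mathrm{I}\}}\varphi$ iff $\Gamma\models_{\mathfrak{N}_w^{\mathrm{I}}}\varphi$, where (I) is the rule scheme $\varphi\Rightarrow\varphi^{*}\vdash\psi$ and $\mathfrak{N}_w^{\mathrm{I}}$ is the class of $\mathfrak{N}_w$-models $(\mathbf A,\perp,\{\mathsf{t},\mathsf{f}\})$ such that for all $x,y\in A$, $x\perp x$ implies $x=y$.
   Context: Formulas are built from a countably infinite set of variables using binary $\otimes,\circ$ and unary ${}^{*}$; $\mathbf{Fm}$ is the formula algebra. Abbreviations (also term operations): $\varphi\Rightarrow\psi:=(\varphi\circ\psi^{*})^{*}$; $\varphi\Leftrightarrow\psi:=(\varphi\Rightarrow\psi)\otimes(\psi\Rightarrow\varphi)$; $\varphi\not\Leftrightarrow\psi:=(\varphi\Leftrightarrow\psi)^{*}$; $\varphi\not\Leftrightarrow\psi\not\Leftrightarrow\chi:=((\varphi\not\Leftrightarrow\psi)\otimes(\varphi\not\Leftrightarrow\chi))\otimes(\psi\not\Leftrightarrow\chi)$. $\mathsf{NeL}$: axiom schemes (A1) $\varphi\Rightarrow\varphi$; (A2) $(\varphi\circ\psi)\Rightarrow(\psi\circ\varphi)$; (A3) $\varphi\Rightarrow\varphi^{**}$; (A4) $(\varphi\Rightarrow\psi)\Rightarrow(\varphi\circ\psi)$; (A5) $(\varphi\otimes\psi)\Leftrightarrow(\psi\otimes\varphi)$; (A6) $((\varphi\otimes\psi)\Rightarrow\chi)\Rightarrow((\varphi\otimes\chi^{*})\Rightarrow\psi^{*})$;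 (A7) $(\varphi\not\Leftrightarrow\psi\not\Leftrightarrow\chi)\Rightarrow((\varphi\Rightarrow\psi)\Rightarrow((\psi\Rightarrow\chi)\Rightarrow(\varphi\Rightarrow\chi)))$; rules on arbitrary formulas: $\varphi\Rightarrow\psi,\varphi/\psi$; $\varphi,\psi/\varphi\otimes\psi$; $\varphi\Leftrightarrow\psi,\chi/\chi'$ ($\chi'$ from $\chi$ replacing one or more occurrences of $\varphi$ by $\psi$); $\varphi\otimes\psi/\varphi$. $\mathsf{NeL}+\{\mathrm{I}\}$ adds the rule scheme (I). A weak $\mathcal{N}$-algebra is an algebra $(A,\otimes,\circ,{}^{*})$ of type $(2,2,1)$ with $\otimes,\circ$ commutative, $x^{**}=x$, $(x\otimes y)\circ z=(x\otimes z)\circ y$. With $\mathsf{t}\ne\mathsf{f}$ symbols not in $A$, $\overline A=A\cup\{\mathsf{t},\mathsf{f}\}$, an $\mathfrak{N}_w$-model is $(\mathbf A,\perp,\{\mathsf{t},\mathsf{f}\})$, $\mathbf A$ a weak $\mathcal{N}$-algebra, $\perp\subseteq\overline A\times\overline A$, such that for all $x,y,z\in A$: (a) $x\perp x^{*}$; (b) $x\perp y^{*}$ and $y\perp x^{*}$ imply $x=y$; (c) $x\perp y$ iff $x\circ y\perp\mathsf{t}$; (d) $x\perp\mathsf{t}$ iff $x^{*}\perp\mathsf{f}$; (e) $x\perp\mathsf{f}$ and $y\perp\mathsf{f}$ iff $x\otimes y\perp\mathsf{f}$; (f) $(x\circ y^{*})^{*}\perp(x\circ y)^{*}$; (g) $x\perp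 y$ and $x\perp\mathsf{f}$ imply $y\perp\mathsf{t}$; (h) $(x\not\Leftrightarrow y\not\Leftrightarrow z)\perp((x\Rightarrow y)\Rightarrow((y\Rightarrow z)\Rightarrow(x\Rightarrow z)))^{*}$. $F_\perp=\{a\in A:a\perp\mathsf{f}\}$. For a class $K$ of such models, $\Gamma\models_K\varphi$ iff there is a finite $\Gamma'\subseteq\Gamma$ such that for every model in $K$ and every homomorphism $h:\mathbf{Fm}\to\mathbf A$, $h(\Gamma')\subseteq F_\perp$ implies $h(\varphi)\in F_\perp$. *)

From Stdlib Require Import List.
Import ListNotations.

Inductive fm : Type :=
| Var : nat -> fm
| Tens : fm -> fm -> fm
| Circ : fm -> fm -> fm
| Star : fm -> fm.

Definition Imp (a b : fm) : fm := Star (Circ a (Star b)).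
Definition Iff (a b : fm) : fm := Tens (Imp a b) (Imp b a).
Definition NIff (a b : fm) : fm := Star (Iff a b).
Definition NIff3 (a b c : fm) : fm :=
  Tens (Tens (NIff a b) (NIff a c)) (NIff b c).

Inductive repl0 (p q : fm) : fm -> fm -> Prop :=
| r0_refl c : repl0 p q c c
| r0_here : repl0 p q p q
| r0_tens a a' b b' : repl0 p q a a' -> repl0 p q b b' -> repl0 p q (Tens a b) (Tens a' b')
| r0_circ a a' b b' : repl0 p q a a' -> repl0 p q b b' -> repl0 p q (Circ a b) (Circ a' b')
| r0_star a a' : repl0 p q a a' -> repl0 p q (Star a) (Star a').

Inductive repl1 (p q : fm) : fm -> fm -> Prop :=
| r1_here : repl1 p q p q
| r1_tensl a a' b b' : repl1 p q a a' -> repl0 p q b b' -> repl1 p q (Tens a b) (Tens a' b')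
| r1_tensr a a' b b' : repl0 p q a a' -> repl1 p q b b' -> repl1 p q (Tens a b) (Tens a' b')
| r1_circl a a' b b' : repl1 p q a a' -> repl0 p q b b' -> repl1 p q (Circ a b) (Circ a' b')
| r1_circr a a' b b' : repl0 p q a a' -> repl1 p q b b' -> repl1 p q (Circ a b) (Circ a' b')
| r1_star a a' : repl1 p q a a' -> repl1 p q (Star a) (Star a').

Inductive derivI (Γ : fm -> Prop) : fm -> Prop :=
| d_hyp a : Γ a -> derivI Γ a
| d_A1 a : derivI Γ (Imp a a)
| d_A2 a b : derivI Γ (Imp (Circ a b) (Circ b a))
| d_A3 a : derivI Γ (Imp a (Star (Star a)))
| d_A4 a b : derivI Γ (Imp (Imp a b) (Circ a b))
| d_A5 a b : derivI Γ (Iff (Tens a b) (Tens b a))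
| d_A6 a b c : derivI Γ (Imp (Imp (Tens a b) c) (Imp (Tens a (Star c)) (Star b)))
| d_A7 a b c : derivI Γ (Imp (NIff3 a b c)
                          (Imp (Imp a b) (Imp (Imp b c) (Imp a c))))
| d_MP a b : derivI Γ (Imp a b) -> derivI Γ a -> derivI Γ b
| d_adj a b : derivI Γ a -> derivI Γ b -> derivI Γ (Tens a b)
| d_repl a b c c' : repl1 a b c c' -> derivI Γ (Iff a b) -> derivI Γ c -> derivI Γ c'
| d_simp a b : derivI Γ (Tens a b) -> derivI Γ a
| d_I a b : derivI Γ (Imp a (Star a)) -> derivI Γ b.

Record weakNAlg : Type := {
  car :> Type;
  otens : car -> car -> car;
  ocirc : car -> car -> car;
  ostar : car -> car;
  tens_comm : forall x y, otens x y = otens y x;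
  circ_comm : forall x y, ocirc x y = ocirc y x;
  star_inv : forall x, ostar (ostar x) = x;
  tens_circ : forall x y z, ocirc (otens x y) z = ocirc (otens x z) y
}.

Section Ops.
Variable A : weakNAlg.
Definition aimp (x y : A) : A := ostar A (ocirc A x (ostar A y)).
Definition aiff (x y : A) : A := otens A (aimp x y) (aimp y x).
Definition aniff (x y : A) : A := ostar A (aiff x y).
Definition aniff3 (x y z : A) : A :=
  otens A (otens A (aniff x y) (aniff x z)) (aniff y z).
End Ops.

Inductive ext (A : Type) : Type :=
| El : A -> ext A
| Tt : ext A
| Ff : ext A.
Arguments El {A} _.
Arguments Tt {A}.
Arguments Ff {A}.

Record NwModel : Type := {
  alg : weakNAlg;
  perp : ext alg -> ext alg -> Prop;
  c_a : forall x : alg, perp (El x) (El (ostar alg x));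
  c_b : forall x y : alg, perp (El x) (El (ostar alg y)) ->
          perp (El y) (El (ostar alg x)) -> x = y;
  c_c : forall x y : alg, perp (El x) (El y) <-> perp (El (ocirc alg x y)) Tt;
  c_d : forall x : alg, perp (El x) Tt <-> perp (El (ostar alg x)) Ff;
  c_e : forall x y : alg, (perp (El x) Ff /\ perp (El y) Ff) <->
          perp (El (otens alg x y)) Ff;
  c_f : forall x y : alg,
          perp (El (ostar alg (ocirc alg x (ostar alg y))))
               (El (ostar alg (ocirc alg x y)));
  c_g : forall x y : alg, perp (El x) (El y) -> perp (El x) Ff -> perp (El y) Tt;
  c_h : forall x y z : alg,
          perp (El (aniff3 alg x y z))
               (El (ostar alg (aimp alg (aimp alg x y)
                                 (aimp alg (aimp alg y z) (aimp alg x z)))))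
}.

Definition modelI (M : NwModel) : Prop :=
  forall x y : alg M, perp M (El x) (El x) -> x = y.

Definition Fperp (M : NwModel) (a : alg M) : Prop := perp M (El a) Ff.

Definition is_hom (A : weakNAlg) (h : fm -> A) : Prop :=
  (forall a b, h (Tens a b) = otens A (h a) (h b)) /\
  (forall a b, h (Circ a b) = ocirc A (h a) (h b)) /\
  (forall a, h (Star a) = ostar A (h a)).

Definition sem_cons (K : NwModel -> Prop) (Γ : fm -> Prop) (φ : fm) : Prop :=
  exists Γ' : list fm,
    (forall g, In g Γ' -> Γ g) /\
    forall M : NwModel, K M ->
      forall h : fm -> alg M, is_hom (alg M) h ->
        (forall g, In g Γ' -> Fperp M (h g)) -> Fperp M (h φ).

(* Soundness is an induction on derivations: each axiom scheme is valid because
   of the model condition of the same letter, and rule (I) is sound because in a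
   model of the class a point orthogonal to itself collapses the algebra to a
   single point, which is then designated.

   Completeness uses the Lindenbaum-Tarski model: formulas modulo provable
   equivalence [Γ ⊢ φ ⇔ ψ] (a congruence by the replacement rule), with
   [x ⊥ y] iff [Γ ⊢ x ⇒ y*], [x ⊥ t] iff [Γ ⊢ x*] and [x ⊥ f] iff [Γ ⊢ x].
   The axioms make it an N_w-model, rule (I) puts it in the class, and the
   canonical valuation designates exactly the consequences of Γ. *)

From Stdlib Require Import List Setoid ClassicalEpsilon ProofIrrelevance
  FunctionalExtensionality PropExtensionality.
Import ListNotations.

(** * Soundness *)

Lemma repl1_repl0 a b c c' : repl1 a b c c' -> repl0 a b c c'.
Proof. induction 1; constructor; assumption. Qed.

Section Homomorphisms.
Variables (A : weakNAlg) (h : fm -> A).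
Hypothesis h_hom : is_hom A h.

Lemma hom_Imp a b : h (Imp a b) = aimp A (h a) (h b).
Proof. destruct h_hom as (_ & Hc & Hs). unfold Imp. rewrite Hs, Hc, Hs. reflexivity. Qed.

Lemma hom_Iff a b : h (Iff a b) = aiff A (h a) (h b).
Proof. destruct h_hom as (Ht & _). unfold Iff. rewrite Ht, !hom_Imp. reflexivity. Qed.

Lemma hom_NIff3 a b c : h (NIff3 a b c) = aniff3 A (h a) (h b) (h c).
Proof.
  destruct h_hom as (Ht & _ & Hs). unfold NIff3, NIff.
  rewrite !Ht, !Hs, !hom_Iff. reflexivity.
Qed.

Lemma hom_repl0 a b c c' : h a = h b -> repl0 a b c c' -> h c = h c'.
Proof.
  destruct h_hom as (Ht & Hc & Hs). intros Hab. induction 1; congruence.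
Qed.

End Homomorphisms.

Section ModelFacts.
Variable M : NwModel.
Local Notation A := (alg M).

Lemma Fperp_aimp (x y : A) : Fperp M (aimp A x y) <-> perp M (El x) (El (ostar A y)).
Proof. unfold Fperp, aimp. rewrite <- (c_d M), <- (c_c M). reflexivity. Qed.

Lemma Fperp_otens (x y : A) : Fperp M (otens A x y) <-> Fperp M x /\ Fperp M y.
Proof. symmetry. apply (c_e M). Qed.

Lemma Fperp_aiff_eq (x y : A) : Fperp M (aiff A x y) -> x = y.
Proof.
  unfold aiff. rewrite Fperp_otens, !Fperp_aimp. intros [Hxy Hyx].
  exact (c_b M x y Hxy Hyx).
Qed.

Lemma Fperp_mp (x y : A) : Fperp M (aimp A x y) -> Fperp M x -> Fperp M y.
Proof.
  rewrite Fperp_aimp. intros Hxy Hx.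
  rewrite <- (star_inv A y). apply (c_d M), (c_g M x); assumption.
Qed.

Lemma Fperp_aimp_refl (x : A) : Fperp M (aimp A x x).
Proof. apply Fperp_aimp, c_a. Qed.

Lemma Fperp_ocircC (x y : A) : Fperp M (aimp A (ocirc A x y) (ocirc A y x)).
Proof. apply Fperp_aimp. rewrite circ_comm. apply c_a. Qed.

Lemma Fperp_star_star (x : A) : Fperp M (aimp A x (ostar A (ostar A x))).
Proof. apply Fperp_aimp. rewrite star_inv. apply c_a. Qed.

Lemma Fperp_aimp_ocirc (x y : A) : Fperp M (aimp A (aimp A x y) (ocirc A x y)).
Proof. apply Fperp_aimp, c_f. Qed.

Lemma Fperp_otensC (x y : A) : Fperp M (aiff A (otens A x y) (otens A y x)).
Proof. apply Fperp_otens. split; apply Fperp_aimp; rewrite tens_comm; apply c_a. Qed.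

Lemma Fperp_contrapose (x y z : A) :
  Fperp M (aimp A (aimp A (otens A x y) z) (aimp A (otens A x (ostar A z)) (ostar A y))).
Proof.
  apply Fperp_aimp. unfold aimp at 2. rewrite (star_inv A y), tens_circ. apply c_a.
Qed.

Lemma Fperp_aimp_trans (x y z : A) :
  Fperp M (aimp A (aniff3 A x y z)
             (aimp A (aimp A x y) (aimp A (aimp A y z) (aimp A x z)))).
Proof. apply Fperp_aimp, c_h. Qed.

(* A point orthogonal to itself makes the algebra trivial; there [x ⊥ x* = x],
   so [x∘x = x ⊥ t] by (c) and [x = x* ⊥ f] by (d). *)
Lemma Fperp_of_perp_self (x z : A) :
  modelI M -> perp M (El x) (El x) -> Fperp M z.
Proof.
  intros HI Hx.
  assert (Htriv : forall u v : A, u = v).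
  { intros u v. transitivity x; [symmetry|]; apply HI, Hx. }
  pose proof (c_a M z) as Hz. rewrite (Htriv (ostar A z) z) in Hz.
  apply (c_c M) in Hz. rewrite (Htriv (ocirc A z z) z) in Hz.
  apply (c_d M) in Hz. rewrite (Htriv (ostar A z) z) in Hz. exact Hz.
Qed.

End ModelFacts.

Section SemanticConsequence.
Variable K : NwModel -> Prop.

Lemma sem_cons_hyp (Γ : fm -> Prop) φ : Γ φ -> sem_cons K Γ φ.
Proof.
  intros Hφ. exists [φ]. split.
  - intros g [<-|[]]. exact Hφ.
  - intros M _ h _ HΓ'. apply HΓ'. left. reflexivity.
Qed.

Lemma sem_cons_valid Γ φ :
  (forall M, K M -> forall h, is_hom (alg M) h -> Fperp M (h φ)) -> sem_cons K Γ φ.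
Proof. intros Hvalid. exists []. split; [intros g []|]. auto. Qed.

Lemma sem_cons_rule2 Γ a b c :
  (forall M, K M -> forall h, is_hom (alg M) h ->
     Fperp M (h a) -> Fperp M (h b) -> Fperp M (h c)) ->
  sem_cons K Γ a -> sem_cons K Γ b -> sem_cons K Γ c.
Proof.
  intros Hrule (Γa & HΓa & Ha) (Γb & HΓb & Hb). exists (Γa ++ Γb). split.
  - intros g Hg. apply in_app_or in Hg as [Hg|Hg]; auto.
  - intros M HM h Hh HΓ'. apply (Hrule M HM h Hh).
    + apply Ha; auto. intros g Hg. apply HΓ', in_or_app. auto.
    + apply Hb; auto. intros g Hg. apply HΓ', in_or_app. auto.
Qed.

Lemma sem_cons_rule1 Γ a b :
  (forall M, K M -> forall h, is_hom (alg M) h -> Fperp M (h a) -> Fperp M (h b)) ->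
  sem_cons K Γ a -> sem_cons K Γ b.
Proof. intros Hrule Ha. apply (sem_cons_rule2 Γ a a b); auto. Qed.

End SemanticConsequence.

(* The derived connectives must be tried first: [Iff] and [NIff3] unfold to
   [Tens] terms, which [rewrite Ht] would otherwise take apart. *)
Ltac push_hom Hh :=
  let Ht := fresh in let Hc := fresh in let Hs := fresh in
  pose proof Hh as (Ht & Hc & Hs);
  repeat first [ rewrite (hom_NIff3 _ _ Hh) | rewrite (hom_Iff _ _ Hh)
               | rewrite (hom_Imp _ _ Hh) | rewrite Ht | rewrite Hc | rewrite Hs ].

Lemma derivI_sound Γ φ : derivI Γ φ -> sem_cons modelI Γ φ.
Proof.
  induction 1 as [| | | | | | | |? ? _ IHab _ IHa|? ? _ IHa _ IHb
                  |? ? ? ? Hr _ IHab _ IHc|? ? _ IHab|? ? _ IHa].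
  1: apply sem_cons_hyp; assumption.
  1-7: apply sem_cons_valid; intros M _ h Hh; push_hom Hh.
  - apply Fperp_aimp_refl.
  - apply Fperp_ocircC.
  - apply Fperp_star_star.
  - apply Fperp_aimp_ocirc.
  - apply Fperp_otensC.
  - apply Fperp_contrapose.
  - apply Fperp_aimp_trans.
  - revert IHab IHa. apply sem_cons_rule2. intros M _ h Hh.
    rewrite (hom_Imp _ _ Hh). apply Fperp_mp.
  - revert IHa IHb. apply sem_cons_rule2. intros M _ h (Ht & _) Ha Hb.
    rewrite Ht. apply Fperp_otens. split; assumption.
  - revert IHab IHc. apply sem_cons_rule2. intros M _ h Hh Hab.
    rewrite (hom_Iff _ _ Hh) in Hab. apply Fperp_aiff_eq in Hab.
    rewrite (hom_repl0 _ _ Hh _ _ _ _ Hab (repl1_repl0 _ _ _ _ Hr)). trivial.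
  - revert IHab. apply sem_cons_rule1. intros M _ h (Ht & _) Hab.
    rewrite Ht in Hab. apply Fperp_otens in Hab. apply Hab.
  - revert IHa. apply sem_cons_rule1. intros M HI h Hh Ha.
    rewrite (hom_Imp _ _ Hh), Fperp_aimp in Ha. destruct Hh as (_ & _ & Hs).
    rewrite Hs, star_inv in Ha.
    exact (Fperp_of_perp_self M _ _ HI Ha).
Qed.

(** * Completeness *)

Lemma repl0_refl_or_repl1 a b c c' :
  repl0 a b c c' -> c = c' \/ repl1 a b c c'.
Proof.
  induction 1 as [| |? ? ? ? ? [<-|] ? [<-|]|? ? ? ? ? [<-|] ? [<-|]|? ? ? [<-|]].
  all: first [left; reflexivity | right].
  all: first [constructor; assumption | apply r1_tensr | apply r1_circr].
  all: first [assumption | constructor].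
Qed.

Lemma derivI_repl0 Γ a b c c' :
  repl0 a b c c' -> derivI Γ (Iff a b) -> derivI Γ c -> derivI Γ c'.
Proof.
  intros Hr Hab Hc.
  destruct (repl0_refl_or_repl1 _ _ _ _ Hr) as [<-|Hr1]; [exact Hc|].
  exact (d_repl _ _ _ _ _ Hr1 Hab Hc).
Qed.

Definition peq (Γ : fm -> Prop) (a b : fm) : Prop := derivI Γ (Iff a b).

Section ProvableEquivalence.
Variable Γ : fm -> Prop.

Lemma peq_refl a : peq Γ a a.
Proof. apply d_adj; apply d_A1. Qed.

Lemma derivI_peq a b : peq Γ a b -> derivI Γ a -> derivI Γ b.
Proof. exact (d_repl Γ a b a b (r1_here a b)). Qed.

Lemma peq_repl0 a a' c c' : repl0 a a' c c' -> peq Γ a a' -> peq Γ c c'.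
Proof.
  intros Hr Ha. apply (derivI_repl0 Γ a a' (Iff c c)); [|exact Ha|apply peq_refl].
  repeat constructor; exact Hr.
Qed.

Lemma peq_sym a b : peq Γ a b -> peq Γ b a.
Proof.
  intros Hab. apply (derivI_repl0 Γ a b (Iff a a)); [|exact Hab|apply peq_refl].
  repeat constructor.
Qed.

Lemma peq_trans a b c : peq Γ a b -> peq Γ b c -> peq Γ a c.
Proof.
  intros Hab Hbc. apply (derivI_repl0 Γ b c (Iff a b)); [|exact Hbc|exact Hab].
  repeat constructor.
Qed.

Lemma peq_Tens a a' b b' : peq Γ a a' -> peq Γ b b' -> peq Γ (Tens a b) (Tens a' b').
Proof.
  intros Ha Hb. apply peq_trans with (Tens a' b).
  - apply (peq_repl0 a a'); [repeat constructor|exact Ha].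
  - apply (peq_repl0 b b'); [repeat constructor|exact Hb].
Qed.

Lemma peq_Circ a a' b b' : peq Γ a a' -> peq Γ b b' -> peq Γ (Circ a b) (Circ a' b').
Proof.
  intros Ha Hb. apply peq_trans with (Circ a' b).
  - apply (peq_repl0 a a'); [repeat constructor|exact Ha].
  - apply (peq_repl0 b b'); [repeat constructor|exact Hb].
Qed.

Lemma peq_Star a a' : peq Γ a a' -> peq Γ (Star a) (Star a').
Proof. apply peq_repl0; repeat constructor. Qed.

Lemma peq_Imp a a' b b' : peq Γ a a' -> peq Γ b b' -> peq Γ (Imp a b) (Imp a' b').
Proof. intros Ha Hb. apply peq_Star, peq_Circ, peq_Star; assumption. Qed.

Lemma derivI_peq_iff a b : peq Γ a b -> (derivI Γ a <-> derivI Γ b).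
Proof. split; apply derivI_peq; [|apply peq_sym]; assumption. Qed.

Lemma peq_CircC a b : peq Γ (Circ a b) (Circ b a).
Proof. apply d_adj; apply d_A2. Qed.

Lemma peq_TensC a b : peq Γ (Tens a b) (Tens b a).
Proof. apply d_A5. Qed.

Lemma peq_StarK a : peq Γ (Star (Star a)) a.
Proof.
  apply d_adj; [|apply d_A3].
  apply derivI_peq with (Imp (Star a) (Star a)); [|apply d_A1].
  apply peq_Star, peq_CircC.
Qed.

(* (A6) with [c := z*], read up to [**] and commutativity of [∘]. *)
Lemma derivI_TensCirc a b z : derivI Γ (Imp (Circ (Tens a z) b) (Circ (Tens a b) z)).
Proof.
  apply derivI_peq with (2 := d_A6 Γ a b (Star z)).
  apply peq_trans with (Star (Circ (Star (Circ (Tens a b) z)) (Circ (Tens a z) b))).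
  - apply peq_Star, peq_Circ.
    + apply peq_Star, peq_Circ; [apply peq_refl|apply peq_StarK].
    + eapply peq_trans; [apply peq_StarK|].
      apply peq_Circ; [apply peq_Tens; [apply peq_refl|]|]; apply peq_StarK.
  - apply peq_Star, peq_CircC.
Qed.

Lemma peq_TensCirc a b z : peq Γ (Circ (Tens a b) z) (Circ (Tens a z) b).
Proof. apply d_adj; apply derivI_TensCirc. Qed.

End ProvableEquivalence.

#[export] Instance peq_Equivalence (Γ : fm -> Prop) : Equivalence (peq Γ).
Proof. split; [exact (peq_refl Γ) | exact (peq_sym Γ) | exact (peq_trans Γ)]. Qed.

Section ChoiceQuotient.
Context {T : Type} (R : T -> T -> Prop) {R_equiv : Equivalence R}.

Definition canon (a : T) : T := epsilon (inhabits a) (R a).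

Lemma canon_spec a : R a (canon a).
Proof. unfold canon. apply epsilon_spec. exists a. reflexivity. Qed.

Lemma canon_eq a b : R a b -> canon a = canon b.
Proof.
  intros Hab. unfold canon.
  rewrite (proof_irrelevance _ (inhabits a) (inhabits b)). f_equal.
  apply functional_extensionality; intros c.
  apply propositional_extensionality. rewrite Hab. reflexivity.
Qed.

Lemma canon_idem a : canon (canon a) = canon a.
Proof. apply canon_eq. symmetry. apply canon_spec. Qed.

Definition quot : Type := {a : T | canon a = a}.

Definition cls (a : T) : quot := exist _ (canon a) (canon_idem a).

Lemma rel_cls a : R a (proj1_sig (cls a)).
Proof. apply canon_spec. Qed.

Lemma cls_eq a b : R a b -> cls a = cls b.
Proof. intros Hab. apply subset_eq_compat, canon_eq, Hab. Qed.

Lemma cls_val (x : quot) : cls (proj1_sig x) = x.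
Proof. destruct x as [a Ha]. apply subset_eq_compat, Ha. Qed.

Lemma quot_ind (P : quot -> Prop) : (forall a, P (cls a)) -> forall x, P x.
Proof. intros Hcls x. rewrite <- (cls_val x). apply Hcls. Qed.

End ChoiceQuotient.

Arguments quot_ind {T R R_equiv} P _ x.

Section TermModel.
Variable Γ : fm -> Prop.

Local Notation Q := (quot (peq Γ)).
Local Notation cl := (cls (peq Γ)).

Definition qtens (x y : Q) : Q := cl (Tens (proj1_sig x) (proj1_sig y)).
Definition qcirc (x y : Q) : Q := cl (Circ (proj1_sig x) (proj1_sig y)).
Definition qstar (x : Q) : Q := cl (Star (proj1_sig x)).

Lemma cls_Tens a b : qtens (cl a) (cl b) = cl (Tens a b).
Proof. apply cls_eq. apply peq_Tens; symmetry; apply rel_cls. Qed.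

Lemma cls_Circ a b : qcirc (cl a) (cl b) = cl (Circ a b).
Proof. apply cls_eq. apply peq_Circ; symmetry; apply rel_cls. Qed.

Lemma cls_Star a : qstar (cl a) = cl (Star a).
Proof. apply cls_eq. apply peq_Star; symmetry; apply rel_cls. Qed.

Hint Rewrite cls_Tens cls_Circ cls_Star : cls.

Lemma qtensC (x y : Q) : qtens x y = qtens y x.
Proof.
  induction x as [a] using quot_ind; induction y as [b] using quot_ind.
  autorewrite with cls.
  apply cls_eq, peq_TensC.
Qed.

Lemma qcircC (x y : Q) : qcirc x y = qcirc y x.
Proof.
  induction x as [a] using quot_ind; induction y as [b] using quot_ind.
  autorewrite with cls.
  apply cls_eq, peq_CircC.
Qed.

Lemma qstarK (x : Q) : qstar (qstar x) = x.
Proof.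
  induction x as [a] using quot_ind. autorewrite with cls.
  apply cls_eq, peq_StarK.
Qed.

Lemma qtens_qcirc (x y z : Q) : qcirc (qtens x y) z = qcirc (qtens x z) y.
Proof.
  induction x as [a] using quot_ind; induction y as [b] using quot_ind;
    induction z as [c] using quot_ind.
  autorewrite with cls. apply cls_eq, peq_TensCirc.
Qed.

Definition term_alg : weakNAlg :=
  Build_weakNAlg Q qtens qcirc qstar qtensC qcircC qstarK qtens_qcirc.

Lemma cls_hom : is_hom term_alg cl.
Proof.
  split; [|split]; intros; symmetry; [apply cls_Tens|apply cls_Circ|apply cls_Star].
Qed.

Definition tperp (u v : ext Q) : Prop :=
  match u, v with
  | El x, El y => derivI Γ (Imp (proj1_sig x) (Star (proj1_sig y)))
  | El x, Tt => derivI Γ (Star (proj1_sig x))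
  | El x, Ff => derivI Γ (proj1_sig x)
  | _, _ => False
  end.

Lemma tperp_cls a b : tperp (El (cl a)) (El (cl b)) <-> derivI Γ (Imp a (Star b)).
Proof.
  apply derivI_peq_iff. symmetry. apply peq_Imp; [|apply peq_Star]; apply rel_cls.
Qed.

Lemma tperp_cls_t a : tperp (El (cl a)) Tt <-> derivI Γ (Star a).
Proof. apply derivI_peq_iff. symmetry. apply peq_Star, rel_cls. Qed.

Lemma tperp_cls_f a : tperp (El (cl a)) Ff <-> derivI Γ a.
Proof. apply derivI_peq_iff. symmetry. apply rel_cls. Qed.

Lemma tperp_star (x : Q) : tperp (El x) (El (qstar x)).
Proof.
  induction x as [a] using quot_ind. autorewrite with cls.
  apply tperp_cls, d_A3.
Qed.

Lemma tperp_antisym (x y : Q) :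
  tperp (El x) (El (qstar y)) -> tperp (El y) (El (qstar x)) -> x = y.
Proof.
  induction x as [a] using quot_ind; induction y as [b] using quot_ind.
  autorewrite with cls.
  rewrite !tperp_cls. intros Hab Hba. apply cls_eq, d_adj.
  - revert Hab. apply derivI_peq, peq_Imp; [apply peq_refl|apply peq_StarK].
  - revert Hba. apply derivI_peq, peq_Imp; [apply peq_refl|apply peq_StarK].
Qed.

Lemma tperp_circ_t (x y : Q) : tperp (El x) (El y) <-> tperp (El (qcirc x y)) Tt.
Proof.
  induction x as [a] using quot_ind; induction y as [b] using quot_ind.
  autorewrite with cls.
  rewrite tperp_cls, tperp_cls_t. apply derivI_peq_iff.
  apply peq_Star, peq_Circ; [apply peq_refl|apply peq_StarK].
Qed.

Lemma tperp_t_star_f (x : Q) : tperp (El x) Tt <-> tperp (El (qstar x)) Ff.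
Proof.
  induction x as [a] using quot_ind. autorewrite with cls.
  rewrite tperp_cls_t, tperp_cls_f. reflexivity.
Qed.

Lemma tperp_tens_f (x y : Q) :
  (tperp (El x) Ff /\ tperp (El y) Ff) <-> tperp (El (qtens x y)) Ff.
Proof.
  induction x as [a] using quot_ind; induction y as [b] using quot_ind.
  autorewrite with cls.
  rewrite !tperp_cls_f. split.
  - intros [Ha Hb]. apply d_adj; assumption.
  - intros Hab. split; [exact (d_simp _ _ _ Hab)|].
    apply (d_simp _ _ a). revert Hab. apply derivI_peq, peq_TensC.
Qed.

Lemma tperp_imp_circ (x y : Q) :
  tperp (El (qstar (qcirc x (qstar y)))) (El (qstar (qcirc x y))).
Proof.
  induction x as [a] using quot_ind; induction y as [b] using quot_ind.
  autorewrite with cls.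
  apply tperp_cls. apply derivI_peq with (2 := d_A4 Γ a b).
  apply peq_Imp; [apply peq_refl|]. symmetry. apply peq_StarK.
Qed.

Lemma tperp_mp (x y : Q) : tperp (El x) (El y) -> tperp (El x) Ff -> tperp (El y) Tt.
Proof.
  induction x as [a] using quot_ind; induction y as [b] using quot_ind.
  rewrite tperp_cls, tperp_cls_f, tperp_cls_t. apply d_MP.
Qed.

Lemma tperp_trans_axiom (x y z : Q) :
  tperp (El (aniff3 term_alg x y z))
        (El (ostar term_alg (aimp term_alg (aimp term_alg x y)
               (aimp term_alg (aimp term_alg y z) (aimp term_alg x z))))).
Proof.
  induction x as [a] using quot_ind; induction y as [b] using quot_ind;
    induction z as [c] using quot_ind.
  rewrite <- (hom_NIff3 _ _ cls_hom), <- !(hom_Imp _ _ cls_hom).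
  change (ostar term_alg) with qstar. rewrite cls_Star.
  apply tperp_cls. apply derivI_peq with (2 := d_A7 Γ a b c).
  apply peq_Imp; [apply peq_refl|]. symmetry. apply peq_StarK.
Qed.

Definition term_model : NwModel :=
  Build_NwModel term_alg tperp tperp_star tperp_antisym tperp_circ_t tperp_t_star_f
    tperp_tens_f tperp_imp_circ tperp_mp tperp_trans_axiom.

Lemma term_model_I : modelI term_model.
Proof.
  intros x y. change Q in x, y. change (tperp (El x) (El x) -> x = y).
  induction x as [a] using quot_ind; induction y as [b] using quot_ind.
  rewrite tperp_cls. intros Hself. apply cls_eq, (d_I _ _ _ Hself).
Qed.

End TermModel.

Lemma sem_cons_complete Γ φ : sem_cons modelI Γ φ -> derivI Γ φ.
Proof.
  intros (Γ' & HΓ' & Hvalid).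
  apply (tperp_cls_f Γ φ).
  apply (Hvalid (term_model Γ) (term_model_I Γ) _ (cls_hom Γ)).
  intros g Hg. apply (tperp_cls_f Γ g), d_hyp, HΓ', Hg.
Qed.

Theorem theorem5p3 :
  forall (Γ : fm -> Prop) (φ : fm), derivI Γ φ <-> sem_cons modelI Γ φ.
Proof.
  intros Γ φ. split; [apply derivI_sound | apply sem_cons_complete].
Qed.
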